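(* Let $\lambda_n$ denote the largest eigenvalue of the real symmetric $n\times n$ matrix $\mathcal A_n$ defined below. There exists $n_0$ such that for all integers $n\ge n_0$, $$4-\frac{40}{n}<\lambda_n<4-\frac{2}{n}.$$
   Context: For an integer $n\ge 3$, $\mathcal A_n=(a_{jk})_{j,k=0}^{n-1}$ is the $n\times n$ real matrix with diagonal entries $a_{jj}=2\cos\frac{2\pi j}{n}$, with $a_{j,j+1}=a_{j+1,j}=1$ for $0\le j\le n-2$, with $a_{0,n-1}=a_{n-1,0}=1$, and all other entries $0$. (It is the matrix of $x+x^{-1}+y+y^{-1}$ in the representation $T_1$ of the finite Heisenberg group $H_n$.) *)

From HB Require Import structures.
From mathcomp Require Import all_boot all_order all_algebra.
From mathcomp Require Import reals trigo.
Set Implicit Arguments. Unset Strict Implicit. Unset Printing Implicit Defensive.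
Import Order.TTheory GRing.Theory Num.Theory.
Local Open Scope ring_scope.

Definition Amat (R : realType) (n : nat) : 'M[R]_n :=
  \matrix_(j < n, k < n)
    if j == k :> nat then 2 * cos (2 * pi * j%:R / n%:R)
    else if [|| (k == (j : nat).+1 :> nat), (j == (k : nat).+1 :> nat),
               ((j == 0 :> nat) && (k == n.-1 :> nat))
             | ((j == n.-1 :> nat) && (k == 0 :> nat))]
         then 1 else 0.

Definition largest_eigenvalue (R : realType) (n : nat) (A : 'M[R]_n) (lam : R) :=
  eigenvalue A lam /\ forall mu : R, eigenvalue A mu -> mu <= lam.

(* The largest eigenvalue of the symmetric matrix [A_n] is the supremum of its
   Rayleigh quotient, so it is squeezed between the quotient of any nonzero test
   vector and any uniform bound on the quadratic form.  Both test vectors depend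
   only on the circular distance [d] of an index to [0], and row [j] of [A_n]
   then reads [2 cos (2 pi d / n) F(d) + F(d + 1) + F(d - 1)].
   Lower bound: [F(d) = (L^2 - d^2)^2] for [d <= L], [L ~ sqrt n / 2], gives a
   quotient at least [4 - 39/n].  Upper bound: [A_n] has nonnegative off-diagonal
   entries, and [g(d) = 1 / (2 n + 3 d^2)] satisfies [A_n g <= (4 - 11/(5 n)) g]
   entrywise; by the Schur test this bounds the form by [4 - 11/(5 n)].  Both row
   inequalities follow from [theta^2 (1 - theta^2/8)^2 <= 2 - 2 cos theta <= theta^2]. *)

From HB Require Import structures.
From mathcomp Require Import all_boot all_order all_algebra.
From mathcomp Require Import reals trigo.
From mathcomp Require Import classical_sets topology normedtype derive.
From mathcomp Require Import ring lra zify.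
Set Implicit Arguments. Unset Strict Implicit. Unset Printing Implicit Defensive.
Import Order.TTheory GRing.Theory Num.Theory.
Import numFieldNormedType.Exports.
Local Open Scope ring_scope.

(** * Quadratic forms and the largest eigenvalue *)

Section BilinearForm.
Variables (R : comNzRingType) (n : nat).
Implicit Types (B : 'M[R]_n) (u v : 'rV[R]_n).

Definition form B u v : R := (u *m B *m v^T) 0 0.

Lemma formDl B u1 u2 v : form B (u1 + u2) v = form B u1 v + form B u2 v.
Proof. by rewrite /form !mulmxDl mxE. Qed.

Lemma formDr B u v1 v2 : form B u (v1 + v2) = form B u v1 + form B u v2.
Proof. by rewrite /form linearD /= mulmxDr mxE. Qed.

Lemma formZl B a u v : form B (a *: u) v = a * form B u v.
Proof. by rewrite /form -!scalemxAl mxE. Qed.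

Lemma formZr B a u v : form B u (a *: v) = a * form B u v.
Proof. by rewrite /form linearZ /= -scalemxAr mxE. Qed.

Lemma form0l B v : form B 0 v = 0.
Proof. by rewrite /form !mul0mx mxE. Qed.

Lemma formC B u v : B^T = B -> form B v u = form B u v.
Proof.
move=> sB; rewrite /form.
have -> : (v *m B *m u^T) 0 0 = ((v *m B *m u^T)^T) 0 0 by rewrite [RHS]mxE.
by rewrite !trmx_mul trmxK sB mulmxA.
Qed.

Lemma formE B u v : form B u v = \sum_i \sum_j u 0 i * B i j * v 0 j.
Proof.
rewrite /form mxE exchange_big /=; apply: eq_bigr => j _.
by rewrite !mxE mulr_suml; apply: eq_bigr => i _.
Qed.

Lemma form1E u v : form 1%:M u v = \sum_i u 0 i * v 0 i.
Proof. by rewrite /form mulmx1 mxE; apply: eq_bigr => i _; rewrite mxE. Qed.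

Lemma form_delta_mxr B v i : form B v (delta_mx 0 i) = (v *m B) 0 i.
Proof. by rewrite /form trmx_delta -colE mxE. Qed.

Lemma form_delta_mx B i : form B (delta_mx 0 i) (delta_mx 0 i) = B i i.
Proof. by rewrite form_delta_mxr -rowE mxE. Qed.

Lemma form_scalar_subl a B u v :
  form (a%:M - B) u v = a * form 1%:M u v - form B u v.
Proof.
rewrite /form mulmxBr mulmxBl mul_mx_scalar mulmx1 -scalemxAl.
by rewrite !mxE.
Qed.

End BilinearForm.

Lemma sqr_le_of_poly_ge0 (R : realFieldType) (a b c : R) : 0 <= c ->
  (forall t, 0 <= a + 2 * t * b + t ^+ 2 * c) -> b ^+ 2 <= a * c.
Proof.
move=> c0 H; have := H 0; rewrite expr0n /= !(mul0r, mulr0, addr0) => a0.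
have [c_gt0|c_le0] := ltrP 0 c.
  have := H (- (b / c)); have : c * (b / c) = b by rewrite mulrC divfK ?gt_eqF.
  nra.
have c00 : c = 0 by apply/le_anti; rewrite c_le0 c0.
subst c; have [->|bn0] := eqVneq b 0; first by rewrite expr0n /= mulr0.
have := H (- (a + 1) / (2 * b)); rewrite mulr0 addr0.
have -> : 2 * (- (a + 1) / (2 * b)) * b = - (a + 1) by field.
lra.
Qed.

Lemma weighted_amgm (R : realFieldType) (a b p q : R) : 0 < p -> 0 < q ->
  2 * (a * b) <= a ^+ 2 * (q / p) + b ^+ 2 * (p / q).
Proof.
move=> p0 q0; have pq0 : 0 < p * q by rewrite mulr_gt0.
have : 0 <= (a * q - b * p) ^+ 2 / (p * q) by rewrite divr_ge0 ?sqr_ge0 ?ltW.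
have -> : (a * q - b * p) ^+ 2 / (p * q) =
          a ^+ 2 * (q / p) + b ^+ 2 * (p / q) - 2 * (a * b).
  by field; rewrite !gt_eqF.
lra.
Qed.

Section PositiveForm.
Variables (R : realFieldType) (n : nat).
Implicit Types (A B : 'M[R]_n) (u v : 'rV[R]_n).

Definition psd B := forall v, 0 <= form B v v.

Lemma form_sqr_le B u v : B^T = B -> psd B ->
  form B u v ^+ 2 <= form B u u * form B v v.
Proof.
move=> sB psdB; apply: sqr_le_of_poly_ge0 => [|t]; first exact: psdB.
have := psdB (u + t *: v).
by rewrite formDl !formDr !formZl !formZr (formC _ _ sB); lra.
Qed.

Lemma psd1 : psd 1%:M.
Proof. by move=> v; rewrite form1E sumr_ge0 // => i _; rewrite -expr2 sqr_ge0. Qed.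

Lemma form1_gt0 v : v != 0 -> 0 < form 1%:M v v.
Proof.
move=> vn0; rewrite lt_def psd1 andbT; apply: contra vn0 => /eqP v0.
apply/eqP/rowP => i; rewrite mxE; apply/eqP; rewrite -sqrf_eq0 expr2.
have vv_ge0 k : true -> 0 <= v 0 k * v 0 k by rewrite -expr2 sqr_ge0.
by move: v0; rewrite form1E => /(psumr_eq0P vv_ge0) /(_ i isT) ->.
Qed.

Lemma form1_mul_le_trace B v : B^T = B -> psd B ->
  form 1%:M (v *m B) (v *m B) <= \tr B * form B v v.
Proof.
move=> sB psdB; rewrite form1E /mxtrace mulr_suml; apply: ler_sum => i _.
rewrite -form_delta_mxr -form_delta_mx -expr2 mulrC.
exact: form_sqr_le.
Qed.

Lemma form1_mul_le u (C : 'M[R]_n) :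
  form 1%:M (u *m C) (u *m C) <=
  form 1%:M u u * \sum_k form 1%:M (col k C)^T (col k C)^T.
Proof.
have entry k : (u *m C) 0 k = form 1%:M u (col k C)^T.
  by rewrite /form mulmx1 trmxK colE mulmxA -colE !mxE.
rewrite [X in X <= _]form1E mulr_sumr; apply: ler_sum => k _.
rewrite entry -expr2; apply: form_sqr_le; [exact: tr_scalar_mx | exact: psd1].
Qed.

(* Write [v = (v B) B^-1] and bound both factors by Cauchy-Schwarz. *)
Lemma psd_unitmx_coercive B : B^T = B -> psd B -> B \in unitmx ->
  exists2 K, 0 < K & forall v, form 1%:M v v <= K * form B v v.
Proof.
move=> sB psdB uB.
pose F := \sum_k form 1%:M (col k (invmx B))^T (col k (invmx B))^T.
have F0 : 0 <= F by apply: sumr_ge0 => k _; exact: psd1.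
have tr0 : 0 <= \tr B by apply: sumr_ge0 => i _; rewrite -form_delta_mx.
exists (F * \tr B + 1) => [|v]; first by have := mulr_ge0 F0 tr0; lra.
have := form1_mul_le (v *m B) (invmx B); rewrite mulmxK // -/F.
have := form1_mul_le_trace v sB psdB; have := psdB v; have := psd1 (v *m B).
nra.
Qed.

Lemma eigenvalue_le_form_bound A lam mu :
  (forall v, form A v v <= lam * form 1%:M v v) -> eigenvalue A mu -> mu <= lam.
Proof.
move=> ub /eigenvalueP [v vA vn0]; have := ub v; have := form1_gt0 vn0.
have -> : form A v v = mu * form 1%:M v v.
  by rewrite /form vA -scalemxAl mulmx1 mxE.
nra.
Qed.

(* The least upper bound of the Rayleigh quotient is an eigenvalue: otherwise
   [lam - A] would be coercive and [lam] could be lowered. *)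
Lemma least_form_bound_eigenvalue A lam : A^T = A ->
  (forall v, form A v v <= lam * form 1%:M v v) ->
  (forall c, (forall v, form A v v <= c * form 1%:M v v) -> lam <= c) ->
  eigenvalue A lam.
Proof.
move=> sA ub least.
have sB : (lam%:M - A)^T = lam%:M - A by rewrite linearB /= tr_scalar_mx sA.
have psdB : psd (lam%:M - A).
  by move=> v; rewrite form_scalar_subl subr_ge0.
apply/eigenvalueP; case: (boolP (lam%:M - A \in unitmx)) => [uB|].
  have [K K0 coerc] := psd_unitmx_coercive sB psdB uB.
  suff : lam <= lam - K^-1 by have := invr_gt0 K; lra.
  apply: least => v; have := coerc v; rewrite form_scalar_subl.
  have : K * K^-1 = 1 by rewrite mulfV ?gt_eqF.
  have := psd1 v; have : 0 < K^-1 by rewrite invr_gt0.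
  nra.
rewrite unitmxE unitfE negbK => /det0P [v vn0 vB0]; exists v => //.
by move/eqP: vB0; rewrite mulmxBr mul_mx_scalar subr_eq0 => /eqP.
Qed.

(* Schur test: [2 v_i v_j <= v_i^2 g_j / g_i + v_j^2 g_i / g_j] on the
   nonnegative off-diagonal entries. *)
Lemma form_le_of_supervector A (g : 'I_n -> R) nu :
  A^T = A -> (forall i j, i != j -> 0 <= A i j) -> (forall i, 0 < g i) ->
  (forall i, \sum_j A i j * g j <= nu * g i) ->
  forall v, form A v v <= nu * form 1%:M v v.
Proof.
move=> sA Aoff gpos hg v.
have Asym i j : A j i = A i j by rewrite -[in RHS]sA mxE.
pose y i j := A i j * (v 0 i ^+ 2 * (g j / g i)).
have split_y : form A v v <= (\sum_i \sum_j y i j + \sum_i \sum_j y j i) / 2.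
  rewrite formE -big_split /= mulr_suml; apply: ler_sum => i _.
  rewrite -big_split /= mulr_suml; apply: ler_sum => j _.
  rewrite /y (Asym i j); have [<-|ij] := eqVneq i j.
    by rewrite mulfV ?gt_eqF //; lra.
  have := weighted_amgm (v 0 i) (v 0 j) (gpos i) (gpos j).
  have := Aoff i j ij; nra.
rewrite [X in _ + X]exchange_big /= in split_y.
apply: (le_trans split_y).
have -> : forall S : R, (S + S) / 2 = S by move=> S; field.
rewrite form1E mulr_sumr; apply: ler_sum => i _; rewrite /y -expr2.
have vg_ge0 : 0 <= v 0 i ^+ 2 / g i by rewrite divr_ge0 ?sqr_ge0 ?ltW.
have -> : \sum_j A i j * (v 0 i ^+ 2 * (g j / g i)) =
          v 0 i ^+ 2 / g i * \sum_j A i j * g j.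
  by rewrite mulr_sumr; apply: eq_bigr => j _; ring.
apply: le_trans (ler_wpM2l vg_ge0 (hg i)) _.
by rewrite mulrCA divfK ?gt_eqF.
Qed.

Lemma form_ge_of_rowwise A v mu :
  (forall i, mu * v 0 i ^+ 2 <= v 0 i * \sum_j A i j * v 0 j) ->
  mu * form 1%:M v v <= form A v v.
Proof.
move=> h; rewrite form1E formE mulr_sumr; apply: ler_sum => i _.
rewrite -expr2; apply: le_trans (h i) _; rewrite mulr_sumr.
by under eq_bigr do rewrite mulrA.
Qed.

End PositiveForm.

Lemma form_bounds_largest_eigenvalue (R : realType) (n : nat)
    (A : 'M[R]_n) (c0 c1 : R) (w : 'rV[R]_n) :
  A^T = A -> w != 0 -> c0 * form 1%:M w w <= form A w w ->
  (forall v, form A v v <= c1 * form 1%:M v v) ->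
  exists lam, largest_eigenvalue A lam /\ c0 <= lam <= c1.
Proof.
move=> sA wn0 lb ub.
pose E := [set form A v v / form 1%:M v v | v in [set v | v != 0]]%classic.
have ubE c : (forall v, form A v v <= c * form 1%:M v v) -> ubound E c.
  by move=> h _ [v /= vn0 <-]; rewrite ler_pdivrMr ?form1_gt0.
have supE : has_sup E.
  by split; [exists (form A w w / form 1%:M w w), w | exists c1; exact: ubE].
have ubsup v : form A v v <= sup E * form 1%:M v v.
  have [->|vn0] := eqVneq v 0; first by rewrite !form0l mulr0.
  by rewrite -ler_pdivrMr ?form1_gt0 //; apply: ub_le_sup; [case: supE | exists v].
have least c : (forall v, form A v v <= c * form 1%:M v v) -> sup E <= c.
  by move=> h; apply: ge_sup; [case: supE | exact: ubE].
exists (sup E); split; [split|apply/andP; split].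
- exact: least_form_bound_eigenvalue.
- by move=> mu; apply: eigenvalue_le_form_bound.
- have := ubsup w; have := form1_gt0 wn0; nra.
- exact: least.
Qed.

(** * Trigonometric estimates *)

Section Trigonometry.
Variable R : realType.
Implicit Types x y : R.

Lemma sin_mean_value y : 0 <= y -> exists c, 0 <= c <= y /\ sin y = cos c * y.
Proof.
move=> y0.
have [c cin h] : exists2 c, c \in `[0, y] & sin y - sin 0 = cos c * (y - 0).
  by apply: MVT_segment => //; exact/continuous_subspaceT/continuous_sin.
by exists c; split; [move: cin; rewrite in_itv | move: h; rewrite sin0 !subr0].
Qed.

Lemma sin_sqr_le y : sin y ^+ 2 <= y ^+ 2.
Proof.
wlog y0 : y / 0 <= y.
  move=> H; have [/H //|y_lt0] := lerP 0 y.
  by rewrite -sqrrN -sinN -[in leRHS]sqrrN; apply: H; lra.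
have [c [_ ->]] := sin_mean_value y0; rewrite exprMn.
have : cos c ^+ 2 <= 1 by have := cos_geN1 c; have := cos_le1 c; nra.
have := sqr_ge0 y; nra.
Qed.

Lemma two_sub_two_cos x : 2 - 2 * cos x = 4 * sin (x / 2) ^+ 2.
Proof.
have {1}-> : x = (x / 2) *+ 2 by rewrite -mulr_natr divfK ?pnatr_eq0.
rewrite cos_mulr2n cos2sin2; lra.
Qed.

Lemma two_sub_two_cos_le x : 2 - 2 * cos x <= x ^+ 2.
Proof.
rewrite two_sub_two_cos; have := sin_sqr_le (x / 2).
have -> : (x / 2) ^+ 2 = x ^+ 2 / 4 by field.
lra.
Qed.

Lemma sin_ge_cubic y : 0 <= y -> y * (1 - y ^+ 2 / 2) <= sin y.
Proof.
move=> y0; have [c [/andP [c0 cy] ->]] := sin_mean_value y0.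
have := two_sub_two_cos_le c; have : c ^+ 2 <= y ^+ 2 by rewrite ler_sqr ?nnegrE.
nra.
Qed.

Lemma two_sub_two_cos_ge x : 0 <= x <= 2 ->
  x ^+ 2 * (1 - x ^+ 2 / 8) ^+ 2 <= 2 - 2 * cos x.
Proof.
move=> /andP [x0 x2]; rewrite two_sub_two_cos.
have y0 : 0 <= x / 2 by rewrite divr_ge0.
have lb_ge0 : 0 <= x / 2 * (1 - (x / 2) ^+ 2 / 2) by rewrite mulr_ge0 //; nra.
have sin_ge := sin_ge_cubic y0.
have : (x / 2 * (1 - (x / 2) ^+ 2 / 2)) ^+ 2 <= sin (x / 2) ^+ 2.
  by rewrite ler_sqr ?nnegrE //; exact: le_trans sin_ge.
have -> : (x / 2 * (1 - (x / 2) ^+ 2 / 2)) ^+ 2 = x ^+ 2 * (1 - x ^+ 2 / 8) ^+ 2 / 4.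
  by field.
lra.
Qed.

Lemma cos_le0_pihalf_3pihalf x : pi / 2 <= x <= pi + pi / 2 -> cos x <= 0.
Proof.
move=> /andP [x_ge x_le]; rewrite -(subrK (pi / 2) x) cosDpihalf oppr_le0.
apply: sin_ge0_pi; lra.
Qed.

Lemma pi_le4 : pi <= 4 :> R.
Proof. have := @pihalf_lt2 R; lra. Qed.

Lemma cos_2pi_fracB (N J : R) : N != 0 -> cos (2 * pi * (N - J) / N) = cos (2 * pi * J / N).
Proof.
move=> N0; have -> : 2 * pi * (N - J) / N = - (2 * pi * J / N) + pi *+ 2.
  by rewrite mulr2n; field.
by rewrite cosD2pi cosN.
Qed.

End Trigonometry.

(** * Rows of [A_n] *)

Lemma natr_pred {R : pzRingType} (m : nat) : (0 < m)%N -> m.-1%:R = m%:R - 1 :> R.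
Proof. by move=> m0; rewrite -subn1 natrB. Qed.

Definition succ_mod (n j : nat) := if j.+1 == n then 0%N else j.+1.
Definition pred_mod (n j : nat) := if j == 0%N then n.-1 else j.-1.
Definition cdist (n j : nat) := minn j (n - j).

Lemma cdist_le_half n j : (2 * cdist n j <= n)%N.
Proof. rewrite /cdist; lia. Qed.

Lemma cdist_neighbours n j : (3 <= n)%N -> (j < n)%N -> (2 * cdist n j + 2 <= n)%N ->
  [/\ 0 < cdist n j, cdist n (succ_mod n j) = (cdist n j).+1
     & cdist n (pred_mod n j) = (cdist n j).-1]%N \/
  [/\ 0 < cdist n j, cdist n (succ_mod n j) = (cdist n j).-1
     & cdist n (pred_mod n j) = (cdist n j).+1]%N \/
  [/\ cdist n j = 0, cdist n (succ_mod n j) = 1 & cdist n (pred_mod n j) = 1]%N.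
Proof.
rewrite /cdist /succ_mod /pred_mod => n3 jn near.
have [j0|j_gt0] := posnP j; first by right; right; split; do ?case: ifP; lia.
case: ifP => jn1; first by right; left; split; lia.
by case: (ltnP j (n - j)) => side; [left | right; left]; split; lia.
Qed.

Lemma cdist_neighbours_ge n j : (3 <= n)%N -> (j < n)%N ->
  ((cdist n j).-1 <= cdist n (succ_mod n j))%N /\ ((cdist n j).-1 <= cdist n (pred_mod n j))%N.
Proof. rewrite /cdist /succ_mod /pred_mod; case: ifP; case: ifP; lia. Qed.

Section CirculantRows.
Variable R : realType.

Lemma Amat_sym n : (Amat R n)^T = Amat R n.
Proof.
apply/matrixP => i j; rewrite !mxE eq_sym.
by case: eqP => [->//|_]; congr (if _ then _ else _); lia.
Qed.

Lemma Amat_offdiag_ge0 n (i j : 'I_n) : i != j -> 0 <= Amat R n i j.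
Proof.
move=> ij; rewrite mxE ifF; last by apply: contraNF ij => /eqP/val_inj->.
by case: ifP.
Qed.

Lemma sum_if_eq_nat (n m : nat) (G : nat -> R) : (m < n)%N ->
  \sum_(k < n) (if k == m :> nat then G k else 0) = G m.
Proof. by move=> mn; rewrite -big_mkcond big_ord1_eq mn. Qed.

Lemma Amat_row n (j : 'I_n) (F : nat -> R) : (3 <= n)%N ->
  \sum_(k < n) Amat R n j k * F k =
  2 * cos (2 * pi * j%:R / n%:R) * F j + F (succ_mod n j) + F (pred_mod n j).
Proof.
move=> n3; have jn := ltn_ord j; set c := 2 * cos _.
have entry (k : 'I_n) : Amat R n j k * F k =
    (if k == j :> nat then c * F k else 0) + (if k == succ_mod n j :> nat then F k else 0)
    + (if k == pred_mod n j :> nat then F k else 0).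
  rewrite mxE; have kn := ltn_ord k.
  have [jk|jk] := eqVneq (j : nat) k.
    rewrite -jk; have -> : (j == succ_mod n j :> nat) = false.
      by rewrite /succ_mod; case: ifP; lia.
    have -> : (j == pred_mod n j :> nat) = false by rewrite /pred_mod; case: ifP; lia.
    by rewrite !addr0.
  rewrite add0r.
  case: ifP => hc; case: ifP => hS; case: ifP => hP;
    first [ by rewrite ?mul1r ?mul0r ?add0r ?addr0
          | exfalso; move: hc hS hP; rewrite /succ_mod /pred_mod; case: ifP; case: ifP; lia ].
rewrite (eq_bigr _ (fun k _ => entry k)) !big_split /= (sum_if_eq_nat (fun k => c * F k) jn).
by rewrite !sum_if_eq_nat // /succ_mod /pred_mod; case: ifP; lia.
Qed.

Lemma cos_cdist n j : (0 < n)%N -> (j <= n)%N ->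
  cos (2 * pi * j%:R / n%:R) = cos (2 * pi * (cdist n j)%:R / n%:R) :> R.
Proof.
move=> n0 jn; rewrite /cdist; case: (leqP j (n - j)) => // _.
by rewrite natrB // cos_2pi_fracB // pnatr_eq0 -lt0n.
Qed.

(* [F] must be even because for [d = 0] both neighbours are at distance [1]. *)
Lemma Amat_row_even n (j : 'I_n) (F : R -> R) : (3 <= n)%N ->
  (2 * cdist n j + 2 <= n)%N -> (forall x, F (- x) = F x) ->
  let d := (cdist n j)%:R in
  \sum_(k < n) Amat R n j k * F (cdist n k)%:R =
  2 * cos (2 * pi * d / n%:R) * F d + F (d + 1) + F (d - 1).
Proof.
move=> n3 near Feven /=; have jn := ltn_ord j.
rewrite (Amat_row _ (fun k => F (cdist n k)%:R)) // cos_cdist ?(ltnW jn) //; last lia.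
have [[d_gt0 -> ->]|[[d_gt0 -> ->]|[-> -> ->]]] := cdist_neighbours n3 jn near.
- by rewrite -(natr1 (cdist n j)) natr_pred.
- by rewrite -(natr1 (cdist n j)) natr_pred // addrAC.
- by rewrite add0r sub0r Feven.
Qed.

End CirculantRows.

(** * The two test vectors *)

Section UpperWeight.
Variable R : realFieldType.
Implicit Types N D t s : R.

Definition upper_weight N D : R := (2 * N + 3 * D ^+ 2)^-1.

Lemma upper_weight_gt0 N D : 0 < N -> 0 < upper_weight N D.
Proof. by move=> N0; rewrite invr_gt0; have := sqr_ge0 D; lra. Qed.

Lemma upper_weight_le N D D' : 0 < N -> 0 <= D -> D <= D' ->
  upper_weight N D' <= upper_weight N D.
Proof.
move=> N0 D0 DD'; rewrite lef_pV2 ?posrE; first nra.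
- by have := sqr_ge0 D'; lra.
- by have := sqr_ge0 D; lra.
Qed.

Lemma upper_weight_neighbours N D : 0 < N ->
  upper_weight N (D + 1) + upper_weight N (D - 1) =
  upper_weight N D * (2 + (54 * D ^+ 2 - 12 * N - 18) /
                          ((2 * N + 3 * D ^+ 2 + 3) ^+ 2 - 36 * D ^+ 2)).
Proof.
move=> N0; rewrite /upper_weight.
have Q : (2 * N + 3 * D ^+ 2 + 3) ^+ 2 - 36 * D ^+ 2 =
         (2 * N + 3 * (D + 1) ^+ 2) * (2 * N + 3 * (D - 1) ^+ 2) by ring.
have := sqr_ge0 D; have := sqr_ge0 (D + 1); have := sqr_ge0 (D - 1) => *.
by rewrite Q; field; rewrite ?mulf_neq0 ?gt_eqF //; lra.
Qed.

(* In [upper_gap_*], [t] stands for [D ^+ 2], [s] for [2 - 2 cos (2 pi D / N)],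
   and the fraction is the one of [upper_weight_neighbours]. *)
Lemma upper_gap_poly N t : 1000 <= N -> 0 <= t <= 2 * N ->
  5 * N ^+ 2 * (54 * t - 12 * N - 18) + 11 * N * ((2 * N + 3 * t + 3) ^+ 2 - 36 * t)
  <= 72 * t * ((2 * N + 3 * t + 3) ^+ 2 - 36 * t).
Proof.
move=> N1 /andP [t0 t2].
have h1 : 0 <= 153 * (t - (57 / 765) * N) ^+ 2 by apply: mulr_ge0; [lra | exact: sqr_ge0].
have h2 : 0 <= t * N by rewrite mulr_ge0 //; lra.
have h3 : 0 <= t * t by rewrite mulr_ge0.
have h4 : 0 <= t * (t * N) by rewrite mulr_ge0.
have h5 : 0 <= (2 * N - t) * (N * N) by rewrite mulr_ge0 //; nra.
have h6 : 0 <= (2 * N - t) * (t * N) by rewrite mulr_ge0 //; nra.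
nra.
Qed.

Lemma upper_gap_den_gt0 N t : 3 <= N -> 0 <= t -> 0 < (2 * N + 3 * t + 3) ^+ 2 - 36 * t.
Proof.
move=> N3 t0; have : 0 <= N * t by rewrite mulr_ge0 //; lra.
nra.
Qed.

Lemma upper_gap_small N t s : 1000 <= N -> 0 <= t <= 2 * N -> 72 * t / (5 * N ^+ 2) <= s ->
  11 / (5 * N) + (54 * t - 12 * N - 18) / ((2 * N + 3 * t + 3) ^+ 2 - 36 * t) <= s.
Proof.
move=> N1 /andP [t0 t2] hs; apply: le_trans hs.
have N0 : 0 < N by lra.
have Q0 := @upper_gap_den_gt0 N t ltac:(lra) t0.
set Q := _ - 36 * t in Q0 *; set X := 54 * t - 12 * N - 18.
have -> : 11 / (5 * N) + X / Q = (5 * N ^+ 2 * X + 11 * N * Q) / (5 * N ^+ 2 * Q).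
  by field; rewrite !gt_eqF.
have -> : 72 * t / (5 * N ^+ 2) = 72 * t * Q / (5 * N ^+ 2 * Q) by field; rewrite !gt_eqF.
rewrite ler_pM2r ?invr_gt0 ?mulr_gt0 ?exprn_gt0 //.
by apply: upper_gap_poly; rewrite ?t0.
Qed.

Lemma upper_gap_large N t s : 1000 <= N -> 2 * N <= t -> 8 / N <= s ->
  11 / (5 * N) + (54 * t - 12 * N - 18) / ((2 * N + 3 * t + 3) ^+ 2 - 36 * t) <= s.
Proof.
move=> N1 t2 hs; apply: le_trans hs.
have N0 : 0 < N by lra.
have Q0 := @upper_gap_den_gt0 N t ltac:(lra) ltac:(lra).
set Q := _ - 36 * t in Q0 *; set X := 54 * t - 12 * N - 18.
have -> : 8 / N = 11 / (5 * N) + 29 / (5 * N) by field; rewrite gt_eqF.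
rewrite lerD2l ler_pdivrMr // mulrAC ler_pdivlMr ?mulr_gt0 //.
have : 0 <= t * (t - 2 * N) by rewrite mulr_ge0 //; lra.
rewrite /X /Q; nra.
Qed.

Lemma upper_weight_pred_le N D : 1000 <= N -> 6 <= D ->
  2 * upper_weight N (D - 1) <= (4 - 11 / (5 * N)) * upper_weight N D.
Proof.
move=> N1 D6; rewrite /upper_weight.
have N0 : 0 < N by lra.
have g1 : 0 < 2 * N + 3 * (D - 1) ^+ 2 by have := sqr_ge0 (D - 1); lra.
have g2 : 0 < 2 * N + 3 * D ^+ 2 by have := sqr_ge0 D; lra.
have h : 3 <= 4 - 11 / (5 * N).
  suff : 11 / (5 * N) <= 1 by lra.
  by rewrite ler_pdivrMr ?mulr_gt0 //; lra.
have h2 : 2 * (2 * N + 3 * D ^+ 2) <= 3 * (2 * N + 3 * (D - 1) ^+ 2) by nra.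
rewrite -subr_ge0.
have -> : (4 - 11 / (5 * N)) * (2 * N + 3 * D ^+ 2)^-1 - 2 * (2 * N + 3 * (D - 1) ^+ 2)^-1
  = ((4 - 11 / (5 * N)) * (2 * N + 3 * (D - 1) ^+ 2) - 2 * (2 * N + 3 * D ^+ 2))
     / ((2 * N + 3 * D ^+ 2) * (2 * N + 3 * (D - 1) ^+ 2)).
  by field; rewrite !gt_eqF.
rewrite divr_ge0 ?mulr_ge0 ?ltW //; nra.
Qed.

Lemma upper_weight_far N D c a b : 1000 <= N -> 6 <= D -> c <= 0 ->
  a <= upper_weight N (D - 1) -> b <= upper_weight N (D - 1) ->
  2 * c * upper_weight N D + a + b <= (4 - 11 / (5 * N)) * upper_weight N D.
Proof.
move=> N1 D6 c0 ha hb; have := upper_weight_pred_le N1 D6.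
have : c * upper_weight N D <= 0.
  by rewrite mulr_le0_ge0 // ltW // upper_weight_gt0 //; lra.
lra.
Qed.

End UpperWeight.

Section LowerWeight.
Variable R : realFieldType.
Implicit Types N S D L c : R.

Definition lower_weight L D : R :=
  if D ^+ 2 <= L ^+ 2 then (L ^+ 2 - D ^+ 2) ^+ 2 else 0.

(* [S] stands for [L ^+ 2] and [c] for [cos (2 pi D / N)]. *)
Lemma lower_gap N S D c : 1000 <= N -> N / 8 <= S <= N / 4 -> D ^+ 2 <= S ->
  2 - 2 * c <= 64 * D ^+ 2 / N ^+ 2 ->
  (4 - 39 / N) * (S - D ^+ 2) ^+ 2 <=
  2 * c * (S - D ^+ 2) ^+ 2 + (S - (D + 1) ^+ 2) ^+ 2 + (S - (D - 1) ^+ 2) ^+ 2.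
Proof.
move=> N1 /andP [S8 S4] DS hc; have N0 : 0 < N by lra.
have N20 : 0 < N ^+ 2 by rewrite exprn_gt0.
set t := D ^+ 2 in DS hc *; set z := S - t.
have t0 : 0 <= t by apply: sqr_ge0.
have z0 : 0 <= z by rewrite /z; lra.
have zN : z <= N / 4 by rewrite /z; lra.
have neighbours :
    (S - (D + 1) ^+ 2) ^+ 2 + (S - (D - 1) ^+ 2) ^+ 2 = 2 * z ^+ 2 - 4 * S + 12 * t + 2.
  by rewrite /z /t; ring.
have cos_term : - (4 * t) <= (2 * c - 2) * z ^+ 2.
  have h1 : - (64 * t / N ^+ 2) <= 2 * c - 2 by lra.
  have h2 : 64 * t / N ^+ 2 * z ^+ 2 <= 4 * t.
    rewrite mulrAC ler_pdivrMr //.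
    have zN2 : z ^+ 2 <= N ^+ 2 / 16 by nra.
    have := ler_wpM2l (mulr_ge0 (ler0n _ 64) t0) zN2.
    by have -> : 64 * t * (N ^+ 2 / 16) = 4 * t * N ^+ 2 by field.
  have := ler_wpM2r (sqr_ge0 z) h1; rewrite mulNr; lra.
have sq : 0 <= 39 / N * z ^+ 2 - 8 * z + 16 * N / 39.
  have -> : 39 / N * z ^+ 2 - 8 * z + 16 * N / 39 = 39 / N * (z - 4 * N / 39) ^+ 2.
    by field; rewrite gt_eqF.
  by rewrite mulr_ge0 ?sqr_ge0 // divr_ge0 // ltW.
have : t = S - z by rewrite /z; ring.
lra.
Qed.

Lemma lower_weight_ge0 L D : 0 <= lower_weight L D.
Proof. by rewrite /lower_weight; case: ifP => // _; exact: sqr_ge0. Qed.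

End LowerWeight.

Section CosineEstimates.
Variable R : realType.
Implicit Types N D L : R.

Lemma two_pi_frac_bounds N D : 0 < N -> 0 <= D ->
  0 <= 2 * pi * D / N /\ 4 * D <= 2 * pi * D / N * N <= 8 * D.
Proof.
move=> N0 D0; rewrite divfK ?gt_eqF //.
have := @pi_ge2 R; have := @pi_le4 R => pi4 pi2.
split; first by apply: divr_ge0; nra.
by apply/andP; split; nra.
Qed.

Lemma two_sub_two_cos_frac_le N D : 0 < N -> 0 <= D ->
  2 - 2 * cos (2 * pi * D / N) <= 64 * D ^+ 2 / N ^+ 2.
Proof.
move=> N0 D0; have [x0 /andP [_ xN]] := two_pi_frac_bounds N0 D0.
apply: le_trans (two_sub_two_cos_le _) _; set x := 2 * pi * D / N in x0 xN *.
rewrite ler_pdivlMr ?exprn_gt0 //.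
have : 0 <= x * N by rewrite mulr_ge0 // ltW.
nra.
Qed.

Lemma two_sub_two_cos_frac_small N D : 1000 <= N -> 0 <= D -> 4 * D <= N ->
  D ^+ 2 <= 2 * N -> 72 * D ^+ 2 / (5 * N ^+ 2) <= 2 - 2 * cos (2 * pi * D / N).
Proof.
move=> N1 D0 DN D2N; have N0 : 0 < N by lra.
have [x0 /andP [xN_ge xN_le]] := two_pi_frac_bounds N0 D0.
set x := 2 * pi * D / N in x0 xN_ge xN_le *.
have x2 : x <= 2 by rewrite -(ler_pM2r N0); lra.
apply: le_trans (two_sub_two_cos_ge (introT andP (conj x0 x2))).
have xx_le : x ^+ 2 * N <= 128.
  have : 0 <= x * N by rewrite mulr_ge0 // ltW.
  have : x ^+ 2 * N ^+ 2 <= 128 * N by nra.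
  by rewrite [N ^+ 2]expr2 mulrA ler_pM2r.
have xx_small : x ^+ 2 <= 128 / 1000.
  apply: le_trans (_ : 128 / N <= _); first by rewrite ler_pdivlMr.
  by rewrite ler_pM2l // lef_pV2 ?posrE; lra.
have factor : 9 / 10 <= (1 - x ^+ 2 / 8) ^+ 2 by nra.
rewrite ler_pdivrMr ?mulr_gt0 ?exprn_gt0 //.
have : 16 * D ^+ 2 <= x ^+ 2 * N ^+ 2 by nra.
have := sqr_ge0 x; have := sqr_ge0 N; nra.
Qed.

Lemma two_sub_two_cos_frac_large N D : 0 < N -> 0 <= D -> 4 * D <= N ->
  2 * N <= D ^+ 2 -> 8 / N <= 2 - 2 * cos (2 * pi * D / N).
Proof.
move=> N0 D0 DN D2N.
have [x0 /andP [xN_ge xN_le]] := two_pi_frac_bounds N0 D0.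
set x := 2 * pi * D / N in x0 xN_ge xN_le *.
have x2 : x <= 2 by rewrite -(ler_pM2r N0); lra.
apply: le_trans (two_sub_two_cos_ge (introT andP (conj x0 x2))).
have x2sq : x ^+ 2 <= 4 by nra.
have factor : 1 / 4 <= (1 - x ^+ 2 / 8) ^+ 2.
  have : 1 / 2 <= 1 - x ^+ 2 / 8 by lra.
  nra.
have : 16 * D ^+ 2 <= x ^+ 2 * N ^+ 2 by nra.
rewrite ler_pdivrMr // => h; nra.
Qed.

Lemma upper_weight_near N D : 1000 <= N -> 0 <= D -> 4 * D <= N ->
  2 * cos (2 * pi * D / N) * upper_weight N D + upper_weight N (D + 1)
  + upper_weight N (D - 1) <= (4 - 11 / (5 * N)) * upper_weight N D.
Proof.
move=> N1 D0 DN; have N0 : 0 < N by lra.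
rewrite -addrA upper_weight_neighbours // -subr_ge0.
set g := upper_weight N D; set c := cos _; set gap := (_ - _ - 18) / _.
have -> : (4 - 11 / (5 * N)) * g - (2 * c * g + g * (2 + gap)) =
          g * ((2 - 2 * c) - (11 / (5 * N) + gap)) by ring.
apply: mulr_ge0; first exact/ltW/upper_weight_gt0.
rewrite subr_ge0 {}/gap {}/c.
have [small|large] := lerP (D ^+ 2) (2 * N).
- by apply: upper_gap_small; [|rewrite sqr_ge0 |exact: two_sub_two_cos_frac_small].
- by apply: upper_gap_large; [|exact: ltW|exact: two_sub_two_cos_frac_large (ltW _)].
Qed.

Lemma lower_weight_near N L D : 1000 <= N -> N / 8 <= L ^+ 2 <= N / 4 ->
  0 <= D -> D + 1 <= L ->
  (4 - 39 / N) * lower_weight L D <=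
  2 * cos (2 * pi * D / N) * lower_weight L D + lower_weight L (D + 1)
  + lower_weight L (D - 1).
Proof.
move=> N1 LN D0 DL; have N0 : 0 < N by lra.
have inside x : -1 <= x <= L -> lower_weight L x = (L ^+ 2 - x ^+ 2) ^+ 2.
  by move=> /andP [x1 xL]; rewrite /lower_weight ifT //; nra.
rewrite !inside; try lra.
apply: lower_gap => //; first nra.
exact: two_sub_two_cos_frac_le.
Qed.

End CosineEstimates.

Section TestVectors.
Variable R : realType.

Lemma cos_cdist_le0 n j : (j < n)%N -> (n < 4 * cdist n j)%N ->
  cos (2 * pi * (cdist n j)%:R / n%:R) <= 0 :> R.
Proof.
move=> jn far; have n0 : 0 < n%:R :> R by rewrite ltr0n; lia.
have pi0 := @pi_gt0 R.
have dn4 : n%:R <= 4 * (cdist n j)%:R :> R by rewrite -natrM ler_nat; lia.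
have dn2 : 2 * (cdist n j)%:R <= n%:R :> R by rewrite -natrM ler_nat cdist_le_half.
apply: cos_le0_pihalf_3pihalf; apply/andP; split.
- by rewrite ler_pdivlMr //; nra.
- by rewrite ler_pdivrMr //; nra.
Qed.

Lemma Amat_upper_row n (j : 'I_n) : (1000 <= n)%N ->
  \sum_(k < n) Amat R n j k * upper_weight n%:R (cdist n k)%:R <=
  (4 - 11 / (5 * n%:R)) * upper_weight n%:R (cdist n j)%:R.
Proof.
move=> n1000; have n3 : (3 <= n)%N by lia.
have jn := ltn_ord j.
have N1 : 1000 <= n%:R :> R by rewrite ler_nat.
have [near|far] := leqP (4 * cdist n j) n.
  rewrite Amat_row_even //; last by move=> x; rewrite /upper_weight sqrrN.
  - by apply: upper_weight_near; rewrite ?ler0n // -natrM ler_nat.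
  - have := cdist_le_half n j; lia.
rewrite (Amat_row _ (fun m => upper_weight n%:R (cdist n m)%:R)) //.
rewrite cos_cdist ?(ltnW jn) //; last lia.
have [hS hP] := cdist_neighbours_ge n3 jn.
have d_gt0 : (0 < cdist n j)%N by lia.
have weight_le m : ((cdist n j).-1 <= m)%N ->
    @upper_weight R n%:R m%:R <= upper_weight n%:R ((cdist n j)%:R - 1).
  by move=> dm; rewrite -(natr_pred d_gt0) upper_weight_le ?ler0n ?ler_nat ?ltr0n //; lia.
apply: upper_weight_far => //; try exact: weight_le.
- by rewrite (ler_nat R 6); lia.
- exact: cos_cdist_le0.
Qed.

Definition lower_vec n L : 'rV[R]_n := \row_k lower_weight L%:R (cdist n k)%:R.

Lemma Amat_lower_row n L (j : 'I_n) :
  (1000 <= n)%N -> (4 * L ^ 2 <= n)%N -> (n < 4 * L.+1 ^ 2)%N ->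
  (4 - 39 / n%:R) * lower_weight L%:R (cdist n j)%:R ^+ 2 <=
  lower_weight L%:R (cdist n j)%:R *
  \sum_(k < n) Amat R n j k * lower_weight L%:R (cdist n k)%:R.
Proof.
move=> n1000 nL nL1; have n3 : (3 <= n)%N by lia.
have [Ld|dL] := leqP L (cdist n j).
  suff -> : lower_weight L%:R (cdist n j)%:R = 0 :> R by rewrite expr0n /= !(mulr0, mul0r).
  rewrite /lower_weight; case: ifP => // d_le.
  have -> : (cdist n j)%:R = L%:R :> R.
    by apply/eqP; rewrite eqr_nat eqn_leq Ld andbT -(ler_nat R) -ler_sqr ?nnegrE.
  by rewrite subrr expr0n.
have N1 : 1000 <= n%:R :> R by rewrite ler_nat.
rewrite expr2 mulrCA; apply: ler_wpM2l; first exact: lower_weight_ge0.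
rewrite Amat_row_even //; last by move=> y; rewrite /lower_weight sqrrN.
- apply: lower_weight_near; rewrite ?ler0n // ?natr1 ?ler_nat //.
  rewrite -natrX ler_pdivrMr ?ler_pdivlMr ?ltr0n; try lia.
  by apply/andP; split; rewrite -natrM ler_nat; nia.
- nia.
Qed.

Lemma Amat_form_le n (v : 'rV[R]_n) : (1000 <= n)%N ->
  form (Amat R n) v v <= (4 - 11 / (5 * n%:R)) * form 1%:M v v.
Proof.
move=> n1000; apply: (form_le_of_supervector (g := fun k => upper_weight n%:R (cdist n k)%:R)).
- exact: Amat_sym.
- exact: Amat_offdiag_ge0.
- by move=> k; apply: upper_weight_gt0; rewrite ltr0n; lia.
- by move=> j; apply: Amat_upper_row.
Qed.

Lemma Amat_form_ge n L : (1000 <= n)%N -> (4 * L ^ 2 <= n)%N -> (n < 4 * L.+1 ^ 2)%N ->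
  (4 - 39 / n%:R) * form 1%:M (lower_vec n L) (lower_vec n L) <=
  form (Amat R n) (lower_vec n L) (lower_vec n L).
Proof.
move=> n1000 nL nL1; apply: form_ge_of_rowwise => j.
have entry k : lower_vec n L 0 k = lower_weight L%:R (cdist n k)%:R by rewrite mxE.
rewrite entry; under eq_bigr do rewrite entry.
exact: Amat_lower_row.
Qed.

Lemma lower_vec_neq0 n L : (0 < n)%N -> (0 < L)%N -> lower_vec n L != 0.
Proof.
move=> n0 L0; apply/negP => /eqP /rowP /(_ (Ordinal n0)).
rewrite !mxE /lower_weight /cdist min0n expr0n /= subr0 ifT ?sqr_ge0 //.
by move/eqP; rewrite !expf_eq0 /= pnatr_eq0; lia.
Qed.

End TestVectors.

Lemma exists_half_sqrt n : exists L, (4 * L ^ 2 <= n < 4 * L.+1 ^ 2)%N.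
Proof.
elim: n => [|n [L /andP [h1 h2]]]; first by exists 0%N.
have [h3|h3] := ltnP n.+1 (4 * L.+1 ^ 2); first by exists L; apply/andP; split; lia.
by exists L.+1; apply/andP; split; nia.
Qed.

Theorem lemma2p2 (R : realType) :
  exists n0 : nat, forall n : nat, (3 <= n)%N -> (n0 <= n)%N ->
    exists lam : R, largest_eigenvalue (Amat R n) lam /\
      4 - 40 / n%:R < lam /\ lam < 4 - 2 / n%:R.
Proof.
exists 1000%N => n _ n1000.
have [L /andP [nL nL1]] := exists_half_sqrt n.
have n0 : (0 < n)%N by lia.
have L0 : (0 < L)%N by nia.
have [lam [top /andP [lo hi]]] := form_bounds_largest_eigenvalue (Amat_sym R n)
  (lower_vec_neq0 R n0 L0) (Amat_form_ge R n1000 nL nL1) (fun v => Amat_form_le v n1000).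
exists lam; split => //.
have N0 : 0 < n%:R :> R by rewrite ltr0n; lia.
have N1 : 1000 <= n%:R :> R by rewrite ler_nat.
split.
- apply: lt_le_trans lo; rewrite ltrD2l ltrN2 ltr_pM2r ?invr_gt0 //; lra.
- apply: le_lt_trans hi _; rewrite ltrD2l ltrN2 ltr_pdivrMr //.
  by rewrite mulrAC ltr_pdivlMr ?mulr_gt0 //; lra.
Qed.
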